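(* Fix a branch-and-bound node $\mathcal{N}$ and let $\boldsymbol{\beta}^\star$ solve the node relaxation $\min_{\boldsymbol{\beta}\in\mathbb{R}^p} F(\boldsymbol{X}\boldsymbol{\beta})+2\lambda_2 g_{\mathcal{N}}(\boldsymbol{\beta})$. Let $\bar k=k-|\mathcal{J}_1(\mathcal{N})|$ and $p_f=|\mathcal{J}_f(\mathcal{N})|$. Set $z_j^\star=0$ for $j\in\mathcal{J}_0(\mathcal{N})$ and $z_j^\star=1$ for $j\in\mathcal{J}_1(\mathcal{N})$. On the free set $\mathcal{J}_f(\mathcal{N})$: if $\bar k=0$, set $z_j^\star=0$. If at most $\bar k$ free coefficients are nonzero, set $z_j^\star=1$ for nonzero $\beta_j^\star$ and $z_j^\star=0$ for zero $\beta_j^\star$. Otherwise, sort the free magnitudes as $|\beta_{\pi(1)}^\star|\ge\cdots\ge|\beta_{\pi(p_f)}^\star|$ and find an index $s\in\{0,\ldots,\bar k-1\}$ such that \[ \tau:=\frac{\sum_{r=s+1}^{p_f}|\beta_{\pi(r)}^\star|}{\bar k-s},\qquad |\beta_{\pi(s)}^\star|\ge \tau \ge |\beta_{\pi(s+1)}^\star|, \] with the convention $|\beta_{\pi(0)}^\star|=+\infty$; then set $z_{\pi(r)}^\star=1$ for $r\le s$ and $z_{\pi(r)}^\star=|\beta_{\pi(r)}^\star|/\tau$ for $r>s$, $r=1,\ldots,p_f$. The resulting vector $\boldsymbol{z}^\star$ is an optimal relaxed indicator vector paired with $\boldsymbol{\beta}^\star$, i.e., it attains the infimum defining $g_{\m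athcal{N}}(\boldsymbol{\beta}^\star)$.
   Context: Setting: cardinality-constrained generalized linear model $\min_{\boldsymbol{\beta}}\{f(\boldsymbol{X}\boldsymbol{\beta},\boldsymbol{y})+\lambda_2\|\boldsymbol{\beta}\|_2^2: \|\boldsymbol{\beta}\|_0\le k,\ \|\boldsymbol{\beta}\|_\infty\le M\}$ with $\boldsymbol{X}\in\mathbb{R}^{n\times p}$, convex differentiable loss $f$, $F(\boldsymbol{X}\boldsymbol{\beta}):=f(\boldsymbol{X}\boldsymbol{\beta},\boldsymbol{y})$, $\lambda_2>0$, $M>0$. A branch-and-bound node $\mathcal{N}$ partitions $[p]$ into $\mathcal{J}_0(\mathcal{N})$ (indicators fixed to 0), $\mathcal{J}_1(\mathcal{N})$ (fixed to 1), and the free set $\mathcal{J}_f(\mathcal{N})$. The perspective-relaxation function is $g_{\mathcal{N}}(\boldsymbol{\beta}):=\inf_{\boldsymbol{z}}\{\tfrac12\sum_{j=1}^p\beta_j^2/z_j:\ z_j\in[0,1]\ \forall j\in\mathcal{J}_f(\mathcal{N}),\ \mathbf{1}^\top\boldsymbol{z}\le k,\ |\beta_j|\le Mz_j,\ z_j=0\ \forall j\in\mathcal{J}_0(\mathcal{N}),\ z_j=1\ \forall j\in\mathcal{J}_1(\mathcal{N})\}$, with the convention $\beta_j^2/z_j=0$ when $(\beta_j,z_j)=(0,0)$ and $+\infty$ when $z_j=0$, $\beta_j\neq0$. *)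

From HB Require Import structures.
From mathcomp Require Import all_boot all_order all_algebra.
From mathcomp Require Import all_classical all_reals all_analysis.
Set Implicit Arguments. Unset Strict Implicit. Unset Printing Implicit Defensive.
Import Order.TTheory GRing.Theory Num.Theory.
Import numFieldNormedType.Exports.
Local Open Scope ring_scope.
Local Open Scope classical_set_scope.

Section Persp.
Variables (R : realType) (p : nat).

Definition freeset (J0 J1 : {set 'I_p}) : {set 'I_p} := ~: (J0 :|: J1).

Definition persp (b z : R) : \bar R :=
  if z == 0 then (if b == 0 then 0%E else +oo%E) else (b ^+ 2 / z)%:E.

Definition gN_feasible (M : R) (k : nat) (J0 J1 : {set 'I_p})
    (beta : 'cV[R]_p) (z : 'I_p -> R) : Prop :=
  [/\ (forall j, j \in freeset J0 J1 -> 0 <= z j <= 1),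
      \sum_(j < p) z j <= k%:R,
      (forall j, `|beta j ord0| <= M * z j),
      (forall j, j \in J0 -> z j = 0) &
      (forall j, j \in J1 -> z j = 1)].

Definition gN_obj (beta : 'cV[R]_p) (z : 'I_p -> R) : \bar R :=
  ((2%:R)^-1)%:E * (\sum_(j < p) persp (beta j ord0) (z j))%E.

Definition gN (M : R) (k : nat) (J0 J1 : {set 'I_p}) (beta : 'cV[R]_p) : \bar R :=
  ereal_inf [set gN_obj beta z | z in [set z | gN_feasible M k J0 J1 beta z]].

Definition gN_optimal (M : R) (k : nat) (J0 J1 : {set 'I_p})
    (beta : 'cV[R]_p) (z : 'I_p -> R) : Prop :=
  gN_feasible M k J0 J1 beta z /\ gN_obj beta z = gN M k J0 J1 beta.

(* pi : {1..pf} -> J_f is a bijection sorting free magnitudes decreasingly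
   (1-based ranks as in the paper; values of pi outside 1..pf irrelevant) *)
Definition sorting_perm (J0 J1 : {set 'I_p}) (beta : 'cV[R]_p)
    (pi : nat -> 'I_p) : Prop :=
  let pf := #|freeset J0 J1| in
  [/\ (forall r, (0 < r <= pf)%N -> pi r \in freeset J0 J1),
      (forall r1 r2, (0 < r1 <= pf)%N -> (0 < r2 <= pf)%N -> pi r1 = pi r2 -> r1 = r2),
      (forall j, j \in freeset J0 J1 -> exists2 r, (0 < r <= pf)%N & pi r = j) &
      (forall r1 r2, (0 < r1)%N -> (r1 <= r2 <= pf)%N ->
          `|beta (pi r2) ord0| <= `|beta (pi r1) ord0|)].

Definition tau_of (J0 J1 : {set 'I_p}) (beta : 'cV[R]_p) (pi : nat -> 'I_p)
    (kbar s : nat) : R :=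
  (\sum_(s.+1 <= r < #|freeset J0 J1|.+1) `|beta (pi r) ord0|) / (kbar - s)%:R.

Definition valid_split (J0 J1 : {set 'I_p}) (beta : 'cV[R]_p) (pi : nat -> 'I_p)
    (kbar s : nat) : Prop :=
  let tau := tau_of J0 J1 beta pi kbar s in
  [/\ (s < kbar)%N,
      (s = 0%N \/ tau <= `|beta (pi s) ord0|) &
      `|beta (pi s.+1) ord0| <= tau].

End Persp.

From HB Require Import structures.
From mathcomp Require Import all_boot all_order all_algebra.
From mathcomp Require Import all_classical all_reals all_analysis.
From mathcomp Require Import ring lra zify.
Import Order.TTheory GRing.Theory Num.Theory.
Import numFieldNormedType.Exports.
Local Open Scope ring_scope.

(** For fixed [beta], the infimum defining g_N is a separable convex program in
    [z] with the single knapsack constraint [sum z <= k], so a Lagrange multiplier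
    certifies optimality: if [z] is feasible and every perspective term
    [w |-> beta_j^2 / w] lies above its linearisation
    [beta_j^2 / z_j + t (z_j - w)] on [0, 1], with [t = 0] or the knapsack tight,
    then [z] attains g_N(beta).  For the support indicator [t = 0] works.  In the
    threshold case [t = tau^2] works: the coordinates with [|beta_j| >= tau] sit at
    the cap [z_j = 1], the others at the tangency point [z_j = |beta_j| / tau], and
    the definition of [tau] makes the knapsack tight.  A valid split exists: take
    the least [s] at which the [(s+1)]-st magnitude does not exceed the mean of
    the tail over the [kbar - s] remaining slots.  Feasibility of the relaxation
    minimiser comes from comparing it with [beta = 0], which keeps g_N finite. *)

Lemma exists_mean_split (R : realFieldType) (a : nat -> R) (n m : nat) :
  (forall r, 0 <= a r) -> (0 < m)%N -> (m <= n)%N ->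
  let tau s := (\sum_(s.+1 <= r < n.+1) a r) / (m - s)%:R in
  exists s, [/\ (s < m)%N, s = 0%N \/ tau s <= a s & a s.+1 <= tau s].
Proof.
move=> a_ge0 m_gt0 m_le_n tau.
have fits_ex : exists s, (s < m)%N &&
    ((m - s.+1)%:R * a s.+1 <= \sum_(s.+2 <= r < n.+1) a r).
  by exists m.-1; rewrite prednK // leqnn subnn mul0r sumr_ge0.
have [s /andP[s_lt_m fits_s] s_min] := ex_minnP fits_ex; exists s; split => //.
- case: s s_lt_m fits_s s_min => [|s] s_lt_m fits_s s_min; [by left | right].
  have unfit_prev : ~~ ((m - s.+1)%:R * a s.+1 <= \sum_(s.+2 <= r < n.+1) a r).
    apply/negP => fits_prev; have := s_min s; rewrite (ltn_trans _ s_lt_m) //=.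
    by move=> /(_ fits_prev); rewrite ltnn.
  rewrite -ltNge in unfit_prev.
  by rewrite /tau ler_pdivrMr ?ltr0n ?subn_gt0 // mulrC ltW.
- have s_lt_n : (s < n)%N by apply: leq_trans m_le_n.
  rewrite /tau ler_pdivlMr ?ltr0n ?subn_gt0 // big_ltn ?ltnS //.
  by rewrite -(subnSK s_lt_m) -natr1 mulrDr mulr1 addrC lerD2l mulrC.
Qed.

Section Perspective.
Context {R : realType}.

(* Relies on the convention [x / 0 = 0]. *)
Lemma persp_fin (b w : R) : (w = 0 -> b = 0) -> persp b w = (b ^+ 2 / w)%:E.
Proof.
by rewrite /persp; case: eqP => [/[swap]/[apply]->|//]; rewrite eqxx expr0n mul0r.
Qed.

Lemma persp_ge_tangent (b w c : R) : 0 <= w ->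
  ((2 * `|b| * c - c ^+ 2 * w)%:E <= persp b w)%E.
Proof.
move=> w_ge0; rewrite /persp; have [->|w_neq0] := eqVneq w 0.
  by case: eqP => [->|_]; rewrite ?leey // lee_fin normr0 !mulr0 mul0r subr0.
have w_gt0 : 0 < w by rewrite lt0r w_neq0.
rewrite lee_fin ler_pdivlMr // -(real_normK (num_real b)).
by have := sqr_ge0 (`|b| - c * w); nra.
Qed.

Lemma persp_ge_capped (b w c : R) : 0 <= w <= 1 -> 0 <= c <= `|b| ->
  ((b ^+ 2 + c ^+ 2 * (1 - w))%:E <= persp b w)%E.
Proof.
move=> /andP[w_ge0 w_le1] /andP[c_ge0 c_le_b]; rewrite /persp.
have [->|w_neq0] := eqVneq w 0.
  case: eqP => [b0|_]; last exact: leey.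
  have -> : c = 0 by apply/le_anti; rewrite c_ge0 andbT -(normr0 R) -b0.
  by rewrite b0 expr0n mul0r addr0.
have w_gt0 : 0 < w by rewrite lt0r w_neq0.
rewrite lee_fin ler_pdivlMr // -(real_normK (num_real b)).
have c2w_le_b2 : c ^+ 2 * w <= `|b| ^+ 2.
  apply: le_trans (_ : c ^+ 2 <= _); first by rewrite ler_piMr ?sqr_ge0.
  by rewrite lerXn2r // ?nnegrE.
have gap_ge0 : 0 <= (1 - w) * (`|b| ^+ 2 - c ^+ 2 * w).
  by rewrite mulr_ge0 // subr_ge0.
nra.
Qed.

End Perspective.

Section Node.
Context {R : realType} {p : nat} {M : R} {k : nat} {J0 J1 : {set 'I_p}}.
Local Notation Jf := (freeset J0 J1).
Local Notation kbar := (k - #|J1|)%N.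

Lemma notin_freeset j : (j \notin Jf) = (j \in J0) || (j \in J1).
Proof. by rewrite !inE negbK. Qed.

Lemma sum_fixed_free {z : 'I_p -> R} :
  (forall j, j \in J0 -> z j = 0) -> (forall j, j \in J1 -> z j = 1) ->
  \sum_(j < p) z j = #|J1|%:R + \sum_(j in Jf) z j.
Proof.
move=> zJ0 zJ1; rewrite (bigID (mem Jf)) /= addrC; congr (_ + _).
rewrite (bigID (mem J1)) /= [X in _ + X]big1 ?addr0; last first.
  by move=> j /andP[]; rewrite notin_freeset => /orP[/zJ0|->].
rewrite (eq_bigr (fun _ => 1)); last by move=> j /andP[_ /zJ1].
rewrite (eq_bigl (mem J1)) ?sumr_const // => j /=.
by rewrite -[j \in Jf]negbK notin_freeset; case: (j \in J1); rewrite ?orbT ?andbF ?andbT.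
Qed.

Lemma gN0_le0 : [disjoint J0 & J1] -> (#|J1| <= k)%N -> 0 <= M ->
  (gN M k J0 J1 0 <= 0)%E.
Proof.
move=> J01 J1_le_k M_ge0.
pose z1 j : R := if j \in J1 then 1 else 0.
have z1F : gN_feasible M k J0 J1 0 z1.
  rewrite /z1; split=> [j _||j|j jJ0|j ->] //.
  - by case: ifP; rewrite ?lexx ?ler01.
  - by rewrite -big_mkcond sumr_const ler_nat.
  - by rewrite mxE normr0; case: ifP; rewrite ?mulr1 ?mulr0.
  by rewrite (disjointFr J01 jJ0).
apply: le_trans (ereal_inf_lbound _) _; first by exists z1.
rewrite /gN_obj big1 ?mule0 // => j _.
by rewrite mxE /persp eqxx; case: ifP; rewrite ?expr0n ?mul0r.
Qed.

Lemma gN_infeasible beta : ~ (exists z, gN_feasible M k J0 J1 beta z) ->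
  gN M k J0 J1 beta = +oo%E.
Proof.
move=> infeasible; rewrite /gN (_ : [set z | _]%classic = set0%classic).
  by rewrite image_set0 ereal_inf0.
by apply/seteqP; split=> z // zF; apply: infeasible; exists z.
Qed.

Lemma minimizer_gN_feasible (f : 'cV[R]_p -> R) {c : R} {beta : 'cV[R]_p} :
  0 < c -> [disjoint J0 & J1] -> (#|J1| <= k)%N -> 0 <= M ->
  ((f beta)%:E + c%:E * gN M k J0 J1 beta <= (f 0)%:E + c%:E * gN M k J0 J1 0)%E ->
  exists z, gN_feasible M k J0 J1 beta z.
Proof.
move=> c_gt0 J01 J1_le_k M_ge0 beta_min.
apply: contrapT => /gN_infeasible gN_beta.
have : ((f 0)%:E + c%:E * gN M k J0 J1 0 <= (f 0)%:E)%E.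
  by rewrite geeDl // mule_ge0_le0 ?lee_fin ?(ltW c_gt0) ?gN0_le0.
by move/(le_trans beta_min); rewrite gN_beta gt0_muley ?lte_fin // addey // leye_eq.
Qed.

Section Feasible.
Context {beta : 'cV[R]_p}.
Local Notation nnz := #|[set j in Jf | beta j ord0 != 0%R]|.

Lemma nnz_le_card_free : (nnz <= #|Jf|)%N.
Proof. by apply/subset_leq_card/fintype.subsetP => j; rewrite inE => /andP[]. Qed.

Lemma gN_feasible_eq0 {z : 'I_p -> R} {j : 'I_p} :
  gN_feasible M k J0 J1 beta z -> z j = 0 -> beta j ord0 = 0.
Proof.
by case=> _ _ zM _ _ zj0; apply/normr0_eq0/le_anti; rewrite normr_ge0 andbT -(mulr0 M) -zj0.
Qed.

Lemma gN_optimal_certificate {z : 'I_p -> R} {t : R} :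
  gN_feasible M k J0 J1 beta z -> 0 <= t -> t = 0 \/ \sum_(j < p) z j = k%:R ->
  (forall j w, j \in Jf -> 0 <= w <= 1 ->
     ((beta j ord0 ^+ 2 / z j + t * (z j - w))%:E <= persp (beta j ord0) w)%E) ->
  gN_optimal M k J0 J1 beta z.
Proof.
move=> zF t_ge0 t_slack z_lb; split => //.
have persp_z j : persp (beta j ord0) (z j) = (beta j ord0 ^+ 2 / z j)%:E.
  by apply: persp_fin => /(gN_feasible_eq0 zF).
apply/le_anti; rewrite ereal_inf_lbound ?andbT; last by exists z.
apply/ereal_infP => _ [z' z'F <-].
have term_lb j : ((beta j ord0 ^+ 2 / z j + t * (z j - z' j))%:E
                  <= persp (beta j ord0) (z' j))%E.
  have [jf|jnf] := boolP (j \in Jf); first by apply: z_lb; case: z'F => /(_ j jf).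
  have -> : z' j = z j.
    case: zF z'F => _ _ _ zJ0 zJ1 [_ _ _ z'J0 z'J1].
    rewrite notin_freeset in jnf.
    by case/orP: jnf => [/[dup]/zJ0->/z'J0|/[dup]/zJ1->/z'J1].
  by rewrite subrr mulr0 addr0 persp_z.
rewrite /gN_obj lee_wpmul2l ?lee_fin ?invr_ge0 // (eq_bigr _ (fun j _ => persp_z j)).
apply: (le_trans _ (lee_sum _ (fun j _ => term_lb j))).
rewrite !sumEFin lee_fin big_split /= lerDl -mulr_sumr sumrB.
case: t_slack => [->|zk]; first by rewrite mul0r.
by rewrite mulr_ge0 // zk subr_ge0; case: z'F.
Qed.

Context {z0 : 'I_p -> R}.
Hypotheses (z0F : gN_feasible M k J0 J1 beta z0) (M_ge0 : 0 <= M)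
  (J1_le_k : (#|J1| <= k)%N).

Lemma beta_J0 j : j \in J0 -> beta j ord0 = 0.
Proof. by move=> jJ0; apply: (gN_feasible_eq0 z0F); case: z0F => _ _ _ ->. Qed.

Lemma normr_beta_le j : `|beta j ord0| <= M.
Proof.
case: z0F => z0Jf _ z0M z0J0 z0J1; apply: le_trans (z0M j) _; rewrite ler_piMr //.
have [/z0Jf/andP[]//|] := boolP (j \in Jf).
by rewrite notin_freeset => /orP[/z0J0|/z0J1]->.
Qed.

Lemma sum_free_le_kbar : \sum_(j in Jf) z0 j <= kbar%:R.
Proof.
case: z0F => _ z0_le_k _ z0J0 z0J1.
by move: z0_le_k; rewrite (sum_fixed_free z0J0 z0J1) natrB // -lerBrDl.
Qed.

Lemma gN_feasible_free (z : 'I_p -> R) :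
  (forall j, j \in J0 -> z j = 0) -> (forall j, j \in J1 -> z j = 1) ->
  (forall j, j \in Jf -> 0 <= z j <= 1 /\ `|beta j ord0| <= M * z j) ->
  \sum_(j in Jf) z j <= kbar%:R -> gN_feasible M k J0 J1 beta z.
Proof.
move=> zJ0 zJ1 zJf z_le; split => // [j /zJf[]//||j].
  by rewrite (sum_fixed_free zJ0 zJ1) -lerBrDl -natrB.
have [/zJf[]//|] := boolP (j \in Jf).
rewrite notin_freeset => /orP[jJ0|/zJ1->]; last by rewrite mulr1 normr_beta_le.
by rewrite zJ0 // beta_J0 // normr0 mulr0.
Qed.

Lemma support_indicator_optimal (z : 'I_p -> R) :
  (nnz <= kbar)%N ->
  (forall j, j \in J0 -> z j = 0) -> (forall j, j \in J1 -> z j = 1) ->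
  (forall j, j \in Jf -> z j = if beta j ord0 != 0 then 1 else 0) ->
  gN_optimal M k J0 J1 beta z.
Proof.
move=> nnz_le zJ0 zJ1 zJf.
have zF : gN_feasible M k J0 J1 beta z.
  apply: gN_feasible_free => // [j /zJf->|].
    have [->|_] /= := eqVneq (beta j ord0) 0; first by rewrite normr0 mulr0 lexx ler01.
    by rewrite mulr1 normr_beta_le lexx ler01.
  rewrite (eq_bigr _ zJf) -big_mkcondr sumr_const ler_nat.
  by rewrite -(@eq_card _ [set j in Jf | beta j ord0 != 0%R]) // => j; rewrite inE.
apply: (gN_optimal_certificate zF (lexx 0)) => [|j w /zJf-> w01]; first by left.
apply: (le_trans _ (persp_ge_capped _ _ 0 w01 _)); last by rewrite lexx normr_ge0.
rewrite lee_fin expr0n !mul0r !addr0.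
by have [->|_] := eqVneq (beta j ord0) 0; rewrite ?divr1 // expr0n mul0r.
Qed.

Lemma free_eq0_of_kbar0 : kbar = 0%N -> forall j, j \in Jf -> beta j ord0 = 0.
Proof.
move=> kbar0 j jf; apply: (gN_feasible_eq0 z0F).
have z0Jf_ge0 i : i \in Jf -> 0 <= z0 i by case: z0F => /(_ i) z0Jf _ _ _ _ /z0Jf/andP[].
apply: (psumr_eq0P z0Jf_ge0) => //; apply/le_anti.
by rewrite sumr_ge0 // andbT; have := sum_free_le_kbar; rewrite kbar0.
Qed.

Lemma empty_budget_optimal (z : 'I_p -> R) : kbar = 0%N ->
  (forall j, j \in J0 -> z j = 0) -> (forall j, j \in J1 -> z j = 1) ->
  (forall j, j \in Jf -> z j = 0) -> gN_optimal M k J0 J1 beta z.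
Proof.
move=> kbar0 zJ0 zJ1 zJf; have beta_free0 := free_eq0_of_kbar0 kbar0.
apply: support_indicator_optimal => // [|j jf]; last by rewrite zJf // beta_free0 ?eqxx.
rewrite kbar0 leqn0 cards_eq0; apply/eqP/setP => j.
rewrite finset.in_set0 finset.in_set.
by case: (boolP (j \in Jf)) => //= /(beta_free0 j)->; rewrite eqxx.
Qed.

Section Sorted.
Context { pi : nat -> 'I_p }.
Hypothesis pi_sorted : sorting_perm J0 J1 beta pi.
Local Notation pf := #|Jf|.
Local Notation a r := `|beta (pi r) ord0|.
Local Notation tau s := (tau_of J0 J1 beta pi kbar s).

Lemma sum_free_sorted (f : 'I_p -> R) :
  \sum_(j in Jf) f j = \sum_(1 <= r < pf.+1) f (pi r).
Proof.
case: pi_sorted => pi_in pi_inj pi_onto _.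
rewrite -big_enum /index_iota subSS subn0 -(big_map pi predT f).
apply/perm_big/uniq_perm => [||j]; first exact: enum_uniq.
  by rewrite map_inj_in_uniq ?iota_uniq // => r1 r2; rewrite !mem_iota !add1n; apply: pi_inj.
rewrite mem_enum; apply/idP/mapP => [/pi_onto[r r_in <-]|[r]].
  by exists r; rewrite // mem_iota add1n.
by rewrite mem_iota add1n => /pi_in/[swap]->.
Qed.

Lemma card_nonzero_free_le s :
  (forall r, (s < r <= pf)%N -> beta (pi r) ord0 = 0) ->
  (nnz <= s)%N.
Proof.
case: pi_sorted => _ _ pi_onto _ tail0.
rewrite -[X in (_ <= X)%N](size_iota 1) -(size_map pi).
apply: leq_trans (card_size _); apply/subset_leq_card/fintype.subsetP => j.
rewrite inE => /andP[/pi_onto[r /andP[r_gt0 r_le] <-] nz]; apply/mapP; exists r => //.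
rewrite mem_iota add1n r_gt0 ltnS leqNgt; apply: contra nz => s_lt_r.
by rewrite tail0 ?s_lt_r.
Qed.

Lemma tau_of_gt0 {s} : (s < kbar)%N ->
  (kbar < nnz)%N -> 0 < tau s.
Proof.
move=> s_lt nnz_gt; rewrite divr_gt0 ?ltr0n ?subn_gt0 // lt0r sumr_ge0 // andbT.
apply: contraTneq nnz_gt => tail_sum0; rewrite -leqNgt ltnW //.
apply: leq_ltn_trans s_lt; apply: card_nonzero_free_le => r r_in.
apply/normr0_eq0/eqP; move/eqP: tail_sum0; rewrite psumr_eq0 // => /allP/(_ r).
by rewrite mem_index_iota ltnS r_in; apply.
Qed.

Lemma valid_split_head {s r} : valid_split J0 J1 beta pi kbar s -> (s <= pf)%N ->
  (0 < r <= s)%N -> tau s <= a r.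
Proof.
case: pi_sorted => _ _ _ sorted [_ [s0|tau_le] _] s_le /andP[r_gt0 r_le].
  by move: r_gt0 r_le; rewrite s0; lia.
by apply: le_trans tau_le _; apply: sorted; rewrite ?r_le.
Qed.

Lemma valid_split_tail {s r} : valid_split J0 J1 beta pi kbar s ->
  (s < r <= pf)%N -> a r <= tau s.
Proof.
case: pi_sorted => _ _ _ sorted [_ _ le_tau] r_in.
by apply: le_trans le_tau; apply: sorted.
Qed.

Lemma tau_of_le {s} : valid_split J0 J1 beta pi kbar s -> (s <= pf)%N -> tau s <= M.
Proof.
move=> [s_lt [s0|tau_le] _] s_le; last exact: le_trans tau_le (normr_beta_le _).
have [_ _ z0M _ _] := z0F.
rewrite /tau_of s0 subn0 ler_pdivrMr ?ltr0n -?s0 //.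
have /= <- := sum_free_sorted (fun j => `|beta j ord0|).
apply: le_trans (ler_sum _ (fun j _ => z0M j)) _.
by rewrite -mulr_sumr ler_wpM2l ?sum_free_le_kbar.
Qed.

Section Threshold.
Context {s : nat} {z : 'I_p -> R}.
Hypotheses (nnz_gt : (kbar < nnz)%N) (sV : valid_split J0 J1 beta pi kbar s)
  (zJ0 : forall j, j \in J0 -> z j = 0) (zJ1 : forall j, j \in J1 -> z j = 1)
  (z_head : forall r, (0 < r <= s)%N -> z (pi r) = 1)
  (z_tail : forall r, (s < r <= pf)%N -> z (pi r) = a r / tau s).

Lemma split_lt_card_free : (s < pf)%N.
Proof.
by case: sV => s_lt _ _; apply: leq_trans s_lt (leq_trans (ltnW nnz_gt) nnz_le_card_free).
Qed.

Lemma threshold_tau_gt0 : 0 < tau s.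
Proof. by case: sV => s_lt _ _; apply: tau_of_gt0. Qed.

Lemma threshold_rank_bounds r : (0 < r <= pf)%N ->
  [/\ 0 <= z (pi r) <= 1, a r <= M * z (pi r) &
      forall w, 0 <= w <= 1 -> ((beta (pi r) ord0 ^+ 2 / z (pi r)
        + tau s ^+ 2 * (z (pi r) - w))%:E <= persp (beta (pi r) ord0) w)%E].
Proof.
have tau_gt0 := threshold_tau_gt0.
move=> /andP[r_gt0 r_le]; have [r_le_s|s_lt_r] := leqP r s.
  rewrite z_head ?r_gt0 // ler01 lexx mulr1 normr_beta_le; split=> // w w01.
  rewrite divr1; apply: persp_ge_capped => //.
  by rewrite ltW //= valid_split_head ?r_gt0 // ltnW // split_lt_card_free.
have r_tail : (s < r <= pf)%N by rewrite s_lt_r.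
have a_le_tau := valid_split_tail sV r_tail.
rewrite z_tail //; split=> [|| w /andP[w_ge0 _]].
- by rewrite divr_ge0 ?(ltW tau_gt0) //= ler_pdivrMr // mul1r.
- rewrite mulrCA ler_peMr // ler_pdivlMr // mul1r.
  exact: tau_of_le sV (ltnW split_lt_card_free).
apply: (le_trans _ (persp_ge_tangent _ w (tau s) w_ge0)); rewrite lee_fin.
rewrite -(real_normK (num_real (beta (pi r) ord0))).
have [->|a_neq0] := eqVneq (a r) 0.
  by rewrite expr0n /= !(mul0r, mulr0, add0r, sub0r) mulrN.
move: a_neq0 (gt_eqF tau_gt0); set x := a r; set t := tau s => x_neq0 t_neq0.
by rewrite le_eqVlt; apply/orP; left; apply/eqP; field; rewrite x_neq0 t_neq0.
Qed.

Lemma threshold_sum_free : \sum_(j in Jf) z j = kbar%:R.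
Proof.
have [s_lt _ _] := sV.
have head_sum : \sum_(1 <= r < s.+1) z (pi r) = s%:R.
  rewrite (eq_big_nat _ _ (F2 := fun _ => 1)) => [|r /andP[r_gt0 r_lt]]; last first.
    by apply: z_head; rewrite r_gt0 -ltnS.
  by rewrite sumr_const_nat subSS subn0.
have tail_sum : \sum_(s.+1 <= r < pf.+1) z (pi r) = (kbar - s)%:R.
  rewrite (eq_big_nat _ _ (F2 := fun r => a r / tau s)) => [|r /andP[s_lt_r r_lt]].
    move: threshold_tau_gt0; rewrite -mulr_suml /tau_of.
    set S := \sum_(_ <= _ < _) _ => S_gt0.
    have S_neq0 : S != 0 by apply: contraTneq S_gt0 => ->; rewrite mul0r ltxx.
    by rewrite invf_div mulrCA mulfV // mulr1.
  by apply: z_tail; rewrite s_lt_r -ltnS.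
rewrite sum_free_sorted (big_cat_nat (n := s.+1)) // ?ltnS ?(ltnW split_lt_card_free) //.
by rewrite head_sum tail_sum /= -natrD subnKC // ltnW.
Qed.

Lemma threshold_optimal : gN_optimal M k J0 J1 beta z.
Proof.
have [_ _ rank_of _] := pi_sorted.
have zF : gN_feasible M k J0 J1 beta z.
  apply: gN_feasible_free => // [j /rank_of[r /threshold_rank_bounds[? ? _] <-]|].
    by split.
  by rewrite threshold_sum_free.
apply: (gN_optimal_certificate zF (sqr_ge0 (tau s))).
  by right; rewrite (sum_fixed_free zJ0 zJ1) threshold_sum_free -natrD subnKC.
by move=> j w /rank_of[r /threshold_rank_bounds[_ _ lb] <-]; apply: lb.
Qed.

End Threshold.

End Sorted.

End Feasible.
End Node.

Theorem theorem1 (R : realType) (n p : nat) (X : 'M[R]_(n, p))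
    (F : 'cV[R]_n -> R)
    (F_convex : forall (u v : 'cV[R]_n) (t : R), 0 <= t <= 1 ->
        F (t *: u + (1 - t) *: v) <= t * F u + (1 - t) * F v)
    (F_diff : forall u : 'cV[R]_n, differentiable F u)
    (lambda2 M : R) (k : nat) (J0 J1 : {set 'I_p})
    (lambda2_pos : 0 < lambda2) (M_pos : 0 < M)
    (J01_disj : [disjoint J0 & J1]) (J1_le_k : (#|J1| <= k)%N)
    (betas : 'cV[R]_p)
    (betas_opt : forall beta : 'cV[R]_p,
        ((F (X *m betas))%:E + (2 * lambda2)%:E * gN M k J0 J1 betas
         <= (F (X *m beta))%:E + (2 * lambda2)%:E * gN M k J0 J1 beta)%E) :
  let Jf := freeset J0 J1 in
  let kbar := (k - #|J1|)%N in
  let pf := #|Jf| in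
  let nnz := #|[set j in Jf | betas j ord0 != 0]| in
  (* common part: z_j = 0 on J0, z_j = 1 on J1 *)
  let fixed_ok (z : 'I_p -> R) :=
    (forall j, j \in J0 -> z j = 0) /\ (forall j, j \in J1 -> z j = 1) in
  [/\ (* case kbar = 0 *)
      (kbar = 0%N -> forall z : 'I_p -> R, fixed_ok z ->
         (forall j, j \in Jf -> z j = 0) -> gN_optimal M k J0 J1 betas z),
      (* case at most kbar nonzero free coefficients *)
      ((0 < kbar)%N -> (nnz <= kbar)%N -> forall z : 'I_p -> R, fixed_ok z ->
         (forall j, j \in Jf -> z j = if betas j ord0 != 0 then 1 else 0) ->
         gN_optimal M k J0 J1 betas z) &
      (* otherwise: sorting and threshold *)
      ((0 < kbar)%N -> (kbar < nnz)%N -> forall pi : nat -> 'I_p,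
         sorting_perm J0 J1 betas pi ->
         (exists s, valid_split J0 J1 betas pi kbar s) /\
         (forall s, valid_split J0 J1 betas pi kbar s ->
          forall z : 'I_p -> R, fixed_ok z ->
          (forall r, (0 < r <= s)%N -> z (pi r) = 1) ->
          (forall r, (s < r <= pf)%N ->
             z (pi r) = `|betas (pi r) ord0| / tau_of J0 J1 betas pi kbar s) ->
          gN_optimal M k J0 J1 betas z))].
Proof.
move=> Jf kbar pf nnz fixed_ok; have M_ge0 := ltW M_pos.
have c_gt0 : 0 < 2 * lambda2 by rewrite mulr_gt0.
have [z0 z0F] := minimizer_gN_feasible (fun beta => F (X *m beta)) c_gt0
  J01_disj J1_le_k M_ge0 (betas_opt 0).
split=> [kbar0 z [zJ0 zJ1] | _ nnz_le z [zJ0 zJ1] | kbar_gt0 nnz_gt pi pi_sorted].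
- exact: empty_budget_optimal z0F M_ge0 J1_le_k z kbar0 zJ0 zJ1.
- exact: support_indicator_optimal z0F M_ge0 J1_le_k z nnz_le zJ0 zJ1.
split=> [|s sV z [zJ0 zJ1] z_head z_tail].
  exact: exists_mean_split (fun r => normr_ge0 _) kbar_gt0
    (leq_trans (ltnW nnz_gt) nnz_le_card_free).
exact: (threshold_optimal z0F M_ge0 J1_le_k pi_sorted nnz_gt sV zJ0 zJ1 z_head z_tail).
Qed.
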